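(* In the unweighted setting (all offline weights equal to $1$), any algorithm for two-stage bipartite matching with advice that is $R$-robust is at most $C$-consistent, where $R+C\le \tfrac32$. In other words, no algorithm is simultaneously $R$-robust and $C$-consistent with $R+C>\tfrac32$.
   Context: Setting (two-stage bipartite matching with advice). A bipartite graph $G=(D,S,E)$ has offline vertices $S$ with weights $w_j$ (here all $w_j=1$) and online vertices $D=D_1\sqcup D_2$ arriving in two stages; $E_k$ is the set of edges between $D_k$ and $S$. An algorithm sees $(D_1,S,E_1)$ and the advice (a matching $A\subseteq E_1$), irrevocably chooses a (possibly random, or fractional) matching in $E_1$, then sees $E_2$ and chooses a matching in $E_2$ on the remaining capacity; its value is the (expected) total weight of matched offline vertices. $\mathsf{OPT}(G)$ is the maximum weight of a matching in $G$; $\mathsf{ADVICE}(G,A)=\sum_{j\in S_1}w_j+\max\{\sum_{j\text{ covered by }M}w_j: M\subseteq E_2\text{ a matching covering no vertex of } S_1\}$, where $S_1$ is the set of offline vertices covered by $A$. An algorithm is $R$-robust if its value is $\ge R\cdot\mathsf{OPT}(G)$ for all $G,A$, and $C$-consistent if its value is $\ge C\cdot\mathsf{ADVICE}(G,A)$ for all $G,A$. *)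

From HB Require Import structures.
From mathcomp Require Import all_boot all_order all_algebra.
Set Implicit Arguments. Unset Strict Implicit. Unset Printing Implicit Defensive.
Import Order.TTheory GRing.Theory Num.Theory.
Local Open Scope ring_scope.

(* Bipartite edge relation between online side T and offline side U. *)
Definition brel (T U : finType) := T -> U -> bool.

Definition is_matching (T U : finType) (E : brel T U) (M : {set T * U}) : bool :=
  [forall e, (e \in M) ==> E e.1 e.2] &&
  [forall e, forall f, ((e \in M) && (f \in M) && ((e.1 == f.1) || (e.2 == f.2))) ==> (e == f)].

Definition max_matching (T U : finType) (E : brel T U) : nat :=
  \max_(M : {set T * U} | is_matching E M) #|M|.

(* Whole graph G: online vertices D = D1 + D2 = 'I_n1 + 'I_n2, offline S = 'I_m. *)
Definition full_edges n1 n2 m (E1 : brel 'I_n1 'I_m) (E2 : brel 'I_n2 'I_m)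
  : brel ('I_n1 + 'I_n2)%type 'I_m :=
  fun d s => match d with inl i => E1 i s | inr k => E2 k s end.

Definition OPT n1 n2 m (E1 : brel 'I_n1 'I_m) (E2 : brel 'I_n2 'I_m) : nat :=
  max_matching (full_edges E1 E2).

Definition advice_cover n1 m (A : {set 'I_n1 * 'I_m}) : {set 'I_m} :=
  [set j | [exists i, (i, j) \in A]].

Definition ADVICE n1 n2 m (E2 : brel 'I_n2 'I_m) (A : {set 'I_n1 * 'I_m}) : nat :=
  #|advice_cover A| +
  \max_(M : {set 'I_n2 * 'I_m} | is_matching E2 M &&
          [forall e, (e \in M) ==> (e.2 \notin advice_cover A)]) #|M|.

(* Randomized algorithms are covered via their expected (fractional) matchings. *)
Record algorithm (F : realFieldType) := Algorithm {
  stage1 : forall n1 m : nat, brel 'I_n1 'I_m -> {set 'I_n1 * 'I_m} ->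
           'I_n1 -> 'I_m -> F;
  stage2 : forall n1 m : nat, brel 'I_n1 'I_m -> {set 'I_n1 * 'I_m} ->
           forall n2 : nat, brel 'I_n2 'I_m -> 'I_n2 -> 'I_m -> F
}.

Definition frac_matching (F : realFieldType) (T U : finType) (E : brel T U)
    (cap : U -> F) (x : T -> U -> F) : Prop :=
  (forall i j, 0 <= x i j) /\
  (forall i j, ~~ E i j -> x i j = 0) /\
  (forall i, \sum_j x i j <= 1) /\
  (forall j, \sum_i x i j <= cap j).

Definition valid_algorithm (F : realFieldType) (alg : algorithm F) : Prop :=
  forall n1 n2 m (E1 : brel 'I_n1 'I_m) (E2 : brel 'I_n2 'I_m)
         (A : {set 'I_n1 * 'I_m}),
    is_matching E1 A ->
    let x := stage1 alg E1 A in
    let y := stage2 alg E1 A E2 in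
    frac_matching E1 (fun _ => 1) x /\
    frac_matching E2 (fun j => 1 - \sum_i x i j) y.

Definition alg_value (F : realFieldType) (alg : algorithm F) n1 n2 m
    (E1 : brel 'I_n1 'I_m) (E2 : brel 'I_n2 'I_m) (A : {set 'I_n1 * 'I_m}) : F :=
  \sum_i \sum_j stage1 alg E1 A i j + \sum_k \sum_j stage2 alg E1 A E2 k j.

Definition robust (F : realFieldType) (alg : algorithm F) (R : F) : Prop :=
  forall n1 n2 m (E1 : brel 'I_n1 'I_m) (E2 : brel 'I_n2 'I_m)
         (A : {set 'I_n1 * 'I_m}),
    is_matching E1 A -> R * (OPT E1 E2)%:R <= alg_value alg E1 E2 A.

Definition consistent (F : realFieldType) (alg : algorithm F) (C : F) : Prop :=
  forall n1 n2 m (E1 : brel 'I_n1 'I_m) (E2 : brel 'I_n2 'I_m)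
         (A : {set 'I_n1 * 'I_m}),
    is_matching E1 A -> C * (ADVICE E2 A)%:R <= alg_value alg E1 E2 A.

From HB Require Import structures.
From mathcomp Require Import all_boot all_order all_algebra.
From mathcomp Require Import lra.
Set Implicit Arguments. Unset Strict Implicit. Unset Printing Implicit Defensive.
Import Order.TTheory GRing.Theory Num.Theory.
Local Open Scope ring_scope.

(* One first-stage vertex is adjacent to both offline vertices s0 and s1 and
   the advice matches it to s0.  The first stage cannot tell which of two
   continuations follows: a second-stage vertex adjacent only to s0
   (OPT = 2, so 2R <= value <= 1 + x(s1)), or one adjacent only to s1
   (ADVICE = 2, so 2C <= value <= 1 + x(s0)).  Adding, and using
   x(s0) + x(s1) <= 1, gives 2R + 2C <= 3. *)

Lemma mulr_le_of_ge_le (F : realDomainType) (r a b v : F) :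
  0 <= a -> a <= b -> 0 <= v -> r * b <= v -> r * a <= v.
Proof.
move=> a_ge0 le_ab v_ge0 rb_le; have [r_ge0 | r_lt0] := lerP 0 r.
- exact: le_trans (ler_wpM2l r_ge0 le_ab) rb_le.
- exact: le_trans (mulr_le0_ge0 (ltW r_lt0) a_ge0) v_ge0.
Qed.

Lemma frac_matching_sum_le_cap (F : realFieldType) (T U : finType) (E : brel T U)
    (cap : U -> F) (y : T -> U -> F) (s : U) :
  frac_matching E cap y -> (forall i j, E i j -> j = s) ->
  \sum_i \sum_j y i j <= cap s.
Proof.
move=> [_ [y_off [_ y_col]]] E_s.
have -> : \sum_i \sum_j y i j = \sum_i y i s.
  apply: eq_bigr => i _; rewrite (bigD1 s) //= big1 ?addr0 // => j ne_js.
  by apply: y_off; apply: contra ne_js => /E_s ->.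
exact: y_col.
Qed.

Lemma alg_value_ge0 (F : realFieldType) (alg : algorithm F) n1 n2 m
    (E1 : brel 'I_n1 'I_m) (E2 : brel 'I_n2 'I_m) (A : {set 'I_n1 * 'I_m}) :
  valid_algorithm alg -> is_matching E1 A -> 0 <= alg_value alg E1 E2 A.
Proof.
move=> valid A_m; have [[x_ge0 _] [y_ge0 _]] := valid _ _ _ E1 E2 A A_m.
by apply: addr_ge0; do 2!(apply: sumr_ge0 => ? _).
Qed.

Lemma sum_ord2 (F : realFieldType) (f : 'I_2 -> F) : \sum_i f i = f ord0 + f ord_max.
Proof. by rewrite big_ord_recr big_ord1; congr (f _ + _); apply/val_inj. Qed.

Section TwoContinuations.

Definition complete_edges : brel 'I_1 'I_2 := fun _ _ => true.

Definition edges_toward (s : 'I_2) : brel 'I_1 'I_2 := fun _ j => j == s.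

Definition advice0 : {set 'I_1 * 'I_2} := [set (ord0, ord0)].

Lemma advice0_matching : is_matching complete_edges advice0.
Proof.
apply/andP; split; apply/forallP => e; first by rewrite implybT.
apply/forallP => f; rewrite !inE.
by apply/implyP => /andP[/andP[/eqP-> /eqP->] _].
Qed.

Lemma OPT_toward_advised : (2 <= OPT complete_edges (edges_toward ord0))%N.
Proof.
pose M : {set ('I_1 + 'I_1)%type * 'I_2} := [set (inl ord0, ord_max); (inr ord0, ord0)].
rewrite /OPT /max_matching; apply: (@leq_trans #|M|); first by rewrite cards2.
apply: leq_bigmax_cond; apply/andP; split; apply/forallP => e.
  by apply/implyP => /set2P[]->.
apply/forallP => f.
by apply/implyP => /andP[/andP[/set2P[]-> /set2P[]->]].
Qed.

Lemma ADVICE_toward_free : (2 <= ADVICE (edges_toward ord_max) advice0)%N.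
Proof.
have covered : (1 <= #|advice_cover advice0|)%N.
  apply/card_gt0P; exists ord0; rewrite inE; apply/existsP; exists ord0.
  by rewrite inE.
pose M : {set 'I_1 * 'I_2} := [set (ord0, ord_max)].
have M_ok : is_matching (edges_toward ord_max) M &&
            [forall e, (e \in M) ==> (e.2 \notin advice_cover advice0)].
  apply/andP; split; [apply/andP; split|]; apply/forallP => e.
  - by rewrite !inE; apply/implyP => /eqP->.
  - apply/forallP => f; rewrite !inE.
    by apply/implyP => /andP[/andP[/eqP-> /eqP->] _].
  - apply/implyP => /set1P->; rewrite inE /=.
    by apply/negP => /existsP[i]; rewrite inE xpair_eqE andbF.
rewrite /ADVICE -[2%N]/(1 + 1)%N leq_add //.
by apply: (@leq_trans #|M|); [rewrite cards1 | apply: leq_bigmax_cond].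
Qed.

Variables (F : realFieldType) (alg : algorithm F).
Hypothesis valid : valid_algorithm alg.

Let x := stage1 alg complete_edges advice0 ord0.

Lemma stage1_total_le1 : x ord0 + x ord_max <= 1.
Proof.
have [[_ [_ [x_row _]]] _] :=
  valid (edges_toward ord0) advice0_matching.
by rewrite -sum_ord2; apply: x_row.
Qed.

Lemma alg_value_toward_le (s : 'I_2) :
  alg_value alg complete_edges (edges_toward s) advice0 <= x ord0 + x ord_max + (1 - x s).
Proof.
have [_ y_frac] := valid (edges_toward s) advice0_matching.
rewrite /alg_value big_ord1 sum_ord2 lerD2l.
have := frac_matching_sum_le_cap y_frac (s := s) (fun _ _ => @eqP _ _ s).
by rewrite !big_ord1; apply.
Qed.

End TwoContinuations.

Theorem mainTheorem6 (F : realFieldType) (alg : algorithm F) (R C : F) :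
  valid_algorithm alg -> robust alg R -> consistent alg C ->
  R + C <= 3 / 2.
Proof.
move=> valid rob cons.
have R2 : R * 2 <= alg_value alg complete_edges (edges_toward ord0) advice0.
  apply: mulr_le_of_ge_le (rob _ _ _ _ _ _ advice0_matching) => //.
    by rewrite (ler_nat F 2) OPT_toward_advised.
  exact: alg_value_ge0 valid advice0_matching.
have C2 : C * 2 <= alg_value alg complete_edges (edges_toward ord_max) advice0.
  apply: mulr_le_of_ge_le (cons _ _ _ _ _ _ advice0_matching) => //.
    by rewrite (ler_nat F 2) ADVICE_toward_free.
  exact: alg_value_ge0 valid advice0_matching.
move: R2 C2 (alg_value_toward_le valid ord0) (alg_value_toward_le valid ord_max).
move: (stage1_total_le1 valid).
set x := stage1 alg complete_edges advice0 ord0.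
set va := alg_value _ _ (edges_toward ord0) _; set vb := alg_value _ _ _ _.
clearbody x va vb; lra.
Qed.
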